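(* Let $(M,g)$ be any Riemannian $n$-manifold and $p,q\in\mathbb R$. If $n\geq 3$, then $\tilde K(\Pi)>0$ for every vertical 2-plane $\Pi$ in $T(BM_q)$ (equivalently, the metric induced by $h_{p,q}$ on the fibres $T_xM\cap BM_q$ has positive sectional curvature) if and only if $(p,q)\in\Gamma$. If $n=2$, the same holds if and only if $(p,q)\in\Gamma'$.
   Context: $\langle\cdot,\cdot\rangle=g$, $|e|^2=\langle e,e\rangle$, $\omega(e)=(1+|e|^2)^{-1}$. $h_{p,q}$ is the generalised Cheeger–Gromoll metric on $TM$: $h_{p,q}(X^h,Y^h)=\langle X,Y\rangle$, $h_{p,q}(X^h,Y^v)=0$, $h_{p,q}(X^v,Y^v)=\omega^p(\langle X,Y\rangle+q\langle X,e\rangle\langle Y,e\rangle)$, where $X^h,X^v$ are horizontal and vertical lifts w.r.t. the Levi-Civita connection; it is Riemannian on $BM_q=\{e:q|e|^2>-1\}$; $\tilde K$ is its sectional curvature; a 2-plane is vertical if it is spanned by vertical vectors. Let $\lambda(p)=8(1-p)/(8+p)$ for $p\neq-8$. Define $\Gamma_+^1=\{(p,q): -8<p\le -2,\ q>\lambda(p)\}$, $\Gamma_+^2=\{(p,q): -2\le p\le 0,\ 2p+q>0\}$, $\Gamma_+^3=\{(p,q): 0\le p\le 1,\ q>0\}$, $\Gamma_+=\Gamma_+^1\cup\Gamma_+^2\cup\Gamma_+^3$; $\Gamma_-=\{(p,q): p+q=1,\ q<0\}$, $\Gamma_-'=\{(p,q): p+q\ge1,\ q<0\}$, $\Gamma_Z=\{(p,0):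 0<p\le 2\}$, $\Gamma_Z'=\{(p,0): p>0\}$; $\Gamma=\Gamma_-\cup\Gamma_Z\cup\Gamma_+$ and $\Gamma'=\Gamma_-'\cup\Gamma_Z'\cup\Gamma_+$. *)

From HB Require Import structures.
From mathcomp Require Import all_boot all_order all_algebra.
From mathcomp Require Import all_classical all_reals all_analysis.
Set Implicit Arguments. Unset Strict Implicit. Unset Printing Implicit Defensive.
Import Order.TTheory GRing.Theory Num.Theory.
Import numFieldNormedType.Exports.
Local Open Scope ring_scope.

(* A fibre T_xM of (M,g) is identified, via an orthonormal frame of (T_xM,g_x),
   with Euclidean space R^n = 'rV[R]_n, the point e being the fibre coordinate
   and the vertical lift of X being the coordinate vector X. *)

Section Fibre.
Variables (R : realType) (n : nat) (p q : R).

Definition inner (X Y : 'rV[R]_n) : R := \sum_(i < n) X ord0 i * Y ord0 i.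
Definition sqnorm (e : 'rV[R]_n) : R := inner e e.
Definition omega (e : 'rV[R]_n) : R := (1 + sqnorm e)^-1.

Definition BMq (e : 'rV[R]_n) : Prop := q * sqnorm e > -1.

(* components of h_{p,q} on vertical vectors at the point e:
   h(d_i^v, d_j^v) = omega^p (delta_ij + q e_i e_j) *)
Definition gmat (e : 'rV[R]_n) : 'M[R]_n :=
  \matrix_(i, j) (omega e `^ p * ((i == j)%:R + q * e ord0 i * e ord0 j)).

Definition ginv (e : 'rV[R]_n) : 'M[R]_n := invmx (gmat e).

Definition basis_vec (k : 'I_n) : 'rV[R]_n := delta_mx ord0 k.

Definition pd (k : 'I_n) (f : 'rV[R]_n -> R) (e : 'rV[R]_n) : R :=
  'D_(basis_vec k) f e.

Definition chr1 (l i j : 'I_n) (e : 'rV[R]_n) : R :=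
  2^-1 * (pd i (fun y => gmat y j l) e + pd j (fun y => gmat y i l) e
          - pd l (fun y => gmat y i j) e).
Definition chr2 (m i j : 'I_n) (e : 'rV[R]_n) : R :=
  \sum_(l < n) ginv e m l * chr1 l i j e.

(* R(d_i,d_j)d_k = \sum_l riem l i j k d_l, with the convention
   R(X,Y)Z = nabla_X nabla_Y Z - nabla_Y nabla_X Z - nabla_[X,Y] Z *)
Definition riem (l i j k : 'I_n) (e : 'rV[R]_n) : R :=
  pd i (chr2 l j k) e - pd j (chr2 l i k) e
  + \sum_(m < n) (chr2 l i m e * chr2 m j k e - chr2 l j m e * chr2 m i k e).

Definition hv (e X Y : 'rV[R]_n) : R :=
  \sum_(i < n) \sum_(j < n) X ord0 i * gmat e i j * Y ord0 j.

Definition RXYY (e X Y : 'rV[R]_n) : 'rV[R]_n :=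
  \row_(l < n) \sum_(i < n) \sum_(j < n) \sum_(k < n)
     X ord0 i * Y ord0 j * Y ord0 k * riem l i j k e.

Definition sectional (e X Y : 'rV[R]_n) : R :=
  hv e (RXYY e X Y) X / (hv e X X * hv e Y Y - hv e X Y ^+ 2).

Definition vertical_positive : Prop :=
  forall e X Y : 'rV[R]_n, BMq e -> row_free (col_mx X Y) ->
    0 < sectional e X Y.

End Fibre.

Section Regions.
Variable R : realType.
Definition lam (p : R) : R := 8 * (1 - p) / (8 + p).
Definition Gamma_plus (p q : R) : Prop :=
  (-8 < p <= -2 /\ q > lam p) \/ (-2 <= p <= 0 /\ 2 * p + q > 0)
  \/ (0 <= p <= 1 /\ q > 0).
Definition Gamma_minus (p q : R) : Prop := p + q = 1 /\ q < 0.
Definition Gamma_minus' (p q : R) : Prop := p + q >= 1 /\ q < 0.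
Definition Gamma_Z (p q : R) : Prop := q = 0 /\ 0 < p <= 2.
Definition Gamma_Z' (p q : R) : Prop := q = 0 /\ 0 < p.
Definition Gamma (p q : R) : Prop :=
  Gamma_minus p q \/ Gamma_Z p q \/ Gamma_plus p q.
Definition Gamma' (p q : R) : Prop :=
  Gamma_minus' p q \/ Gamma_Z' p q \/ Gamma_plus p q.
End Regions.

(* On a fibre, h_{p,q} = omega^p (delta_ij + q e_i e_j) is invariant under the
   orthogonal group, so its Christoffel symbols and curvature tensor are built
   from delta and the position vector e, with coefficients depending only on
   t = |e|^2.  Computing them, the sectional curvature of the vertical plane
   spanned by X, Y has the sign of
       N = P(t) D + p (p + q - 2 - q t) E,
   where D is the Gram determinant of X, Y and E = |<e,X> Y - <e,Y> X|^2 lies in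
   [0, t D].  Since t N = P(t) (t D - E) + Q(t) E, every vertical plane is
   positively curved iff P and Q are positive on the admissible range
   0 <= t, 1 + q t > 0: planes orthogonal to e realise P(t) and planes
   containing e realise Q(t).  When n = 2 every plane contains e, so only Q
   matters.  An elementary discussion of the quadratics P and Q over the
   admissible range produces the regions Gamma and Gamma'. *)

From mathcomp Require Import all_boot all_order all_algebra.
From mathcomp Require Import all_classical all_reals all_analysis.
From mathcomp Require Import ring lra.
Import Order.TTheory GRing.Theory Num.Theory.
Import numFieldNormedType.Exports.
Local Open Scope ring_scope.

Set Implicit Arguments.
Unset Strict Implicit.
Unset Printing Implicit Defensive.

Section DirectionalDerivative.
Variables (R : realType) (V : normedModType R).
Implicit Types (f g : V -> R) (x v : V) (df dg : R).

Lemma derive_line f x v : 'D_v f x = 'D_1 (fun h : R => f (h *: v + x)) 0.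
Proof.
rewrite /derive; set lhs := fun h => h^-1 *: _; set rhs := fun h => h^-1 *: _.
suff -> : lhs = rhs by [].
by apply: funext => h; rewrite /lhs /rhs /= addr0 scale0r add0r [_%:A]mulr1.
Qed.

Lemma is_derive_compR f (g : R -> R) x v df dg :
  is_derive x v f df -> is_derive (f x) 1 g dg ->
  is_derive x v (fun y => g (f y)) (dg * df).
Proof.
move=> [fd fv] [gd gv].
have fl : derivable (fun h : R => f (h *: v + x)) 0 1.
  exact: ((derivable1P f x v).1 fd).
have gl : derivable g (f (0 *: v + x)) 1 by rewrite scale0r add0r.
have gfl : derivable (fun h : R => g (f (h *: v + x))) 0 1.
  by apply/derivable1_diffP/differentiable_comp; exact/derivable1_diffP.
split; first exact: ((derivable1P _ x v).2 gfl).
rewrite derive_line -derive1E.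
have := derive1_comp fl gl; rewrite /comp => ->.
by rewrite !derive1E -derive_line fv scale0r add0r gv.
Qed.

Lemma is_derive_add f g x v df dg : is_derive x v f df -> is_derive x v g dg ->
  is_derive x v (fun y => f y + g y) (df + dg).
Proof. exact: is_deriveD. Qed.

Lemma is_derive_mul f g x v df dg : is_derive x v f df -> is_derive x v g dg ->
  is_derive x v (fun y => f y * g y) (f x * dg + g x * df).
Proof. exact: is_deriveM. Qed.

Lemma is_derive_inv f x v df : f x != 0 -> is_derive x v f df ->
  is_derive x v (fun y => (f y)^-1) (- (f x) ^- 2 * df).
Proof. by move=> fx0 [fd <-]; split; [exact: derivableV | rewrite deriveV]. Qed.

Lemma is_derive_bigsum (m : nat) (F : 'I_m -> V -> R) x v (dF : 'I_m -> R) :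
  (forall i, is_derive x v (F i) (dF i)) ->
  is_derive x v (fun y => \sum_(i < m) F i y) (\sum_(i < m) dF i).
Proof.
move=> /is_derive_sum; congr is_derive.
by apply: funext => y; rewrite fct_sumE.
Qed.

End DirectionalDerivative.

Lemma is_derive_coord (R : realType) (n : nat) (x v : 'rV[R]_n) (i : 'I_n) :
  is_derive x v (fun y : 'rV[R]_n => y ord0 i) (v ord0 i).
Proof.
have line : (fun h : R => (h *: v + x) ord0 i) = (fun h => h * v ord0 i + x ord0 i).
  by apply: funext => h; rewrite !mxE.
have [lin_der lin_val] : is_derive (0 : R) 1 (fun h : R => h * v ord0 i + x ord0 i) (v ord0 i).
  by apply: is_derive_eq; rewrite scaler0 add0r addr0 [_%:A]mulr1.
by split; [apply/derivable1P; rewrite line | rewrite derive_line line].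
Qed.

Ltac derive_poly := repeat match goal with |- is_derive _ _ _ _ =>
  first [ exact: is_derive_cst | exact: is_derive_coord
        | apply: is_derive_add | apply: is_derive_mul ] end.

Section Kronecker.
Variables (R : realType) (n : nat).
Implicit Types (a b m : 'I_n) (w : 'I_n -> R).

Definition kron a b : R := (a == b)%:R.

Lemma kronC a b : kron a b = kron b a.
Proof. by rewrite /kron eq_sym. Qed.

Lemma basis_vecE b a : basis_vec R b ord0 a = kron a b.
Proof. by rewrite /basis_vec mxE eqxx. Qed.

Lemma sum_kronr_mul w a : \sum_m kron a m * w m = w a.
Proof.
rewrite (bigD1 a) //= /kron eqxx mul1r big1 ?addr0 // => m /negbTE.
by rewrite eq_sym => ->; rewrite mul0r.
Qed.

Lemma sum_kronl_mul w a : \sum_m kron m a * w m = w a.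
Proof. by under eq_bigr do rewrite kronC; exact: sum_kronr_mul. Qed.

Lemma sum_mul_kronr w a : \sum_m w m * kron a m = w a.
Proof. by under eq_bigr do rewrite mulrC; exact: sum_kronr_mul. Qed.

Lemma sum_mul_kronl w a : \sum_m w m * kron m a = w a.
Proof. by under eq_bigr do rewrite kronC; exact: sum_mul_kronr. Qed.

Lemma sum_kron_rank1 w a b c (a1 b1 a2 a3 b2 : R) :
  \sum_m (a1 * kron a m + b1 * w m) * (a2 * kron b m + a3 * kron c m + b2 * w m)
  = a1 * (a2 * kron b a + a3 * kron c a + b2 * w a)
    + b1 * (a2 * w b + a3 * w c + b2 * \sum_m w m * w m).
Proof.
rewrite (eq_bigr (fun m => kron a m * (a1 * (a2 * kron b m + a3 * kron c m + b2 * w m))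
   + (b1 * a2 * (w m * kron b m) + b1 * a3 * (w m * kron c m)
      + b1 * b2 * (w m * w m)))); last by move=> m _; ring.
rewrite big_split /= sum_kronr_mul !big_split /= -!mulr_sumr !sum_mul_kronr; ring.
Qed.

End Kronecker.
Arguments kron {R n}.
Arguments kronC {R n}.

Section Inner.
Variables (R : realType) (n : nat).
Implicit Types (a : R) (A B C : 'rV[R]_n).

Lemma innerC A B : inner A B = inner B A.
Proof. by apply: eq_bigr => i _; rewrite mulrC. Qed.

Lemma innerDl A B C : inner (A + B) C = inner A C + inner B C.
Proof. by rewrite /inner -big_split; apply: eq_bigr => i _; rewrite !mxE mulrDl. Qed.

Lemma innerNl A C : inner (- A) C = - inner A C.
Proof. by rewrite /inner -sumrN; apply: eq_bigr => i _; rewrite !mxE mulNr. Qed.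

Lemma innerBl A B C : inner (A - B) C = inner A C - inner B C.
Proof. by rewrite innerDl innerNl. Qed.

Lemma innerZl a A C : inner (a *: A) C = a * inner A C.
Proof. by rewrite /inner mulr_sumr; apply: eq_bigr => i _; rewrite !mxE mulrA. Qed.

Lemma innerDr A B C : inner C (A + B) = inner C A + inner C B.
Proof. by rewrite !(innerC C) innerDl. Qed.

Lemma innerNr A C : inner C (- A) = - inner C A.
Proof. by rewrite !(innerC C) innerNl. Qed.

Lemma innerBr A B C : inner C (A - B) = inner C A - inner C B.
Proof. by rewrite !(innerC C) innerBl. Qed.

Lemma innerZr a A C : inner C (a *: A) = a * inner C A.
Proof. by rewrite !(innerC C) innerZl. Qed.

Definition innerE := (innerDl, innerDr, innerBl, innerBr, innerNl, innerNr, innerZl, innerZr).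

Lemma inner_ge0 A : 0 <= inner A A.
Proof. by apply: sumr_ge0 => i _; rewrite -expr2 sqr_ge0. Qed.

Lemma inner_eq0 A : inner A A = 0 -> A = 0.
Proof.
move=> A0; apply/rowP => i; rewrite mxE.
have /eqP : A ord0 i * A ord0 i = 0.
  by apply: (psumr_eq0P _ A0) => // j _; rewrite -expr2 sqr_ge0.
by rewrite mulf_eq0 orbb => /eqP.
Qed.

End Inner.

Section FibreMetric.
Variables (R : realType) (n : nat) (p q : R).
Implicit Types (e y : 'rV[R]_n) (i j k l m : 'I_n).

Definition rho e := 1 + sqnorm e.
Definition sigma e := 1 + q * sqnorm e.
Definition Phi e := omega e `^ p.
Definition psi e := - p / rho e.

Lemma sqnorm_ge0 e : 0 <= sqnorm e.
Proof. exact: inner_ge0. Qed.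

Lemma rho_gt0 e : 0 < rho e.
Proof. by rewrite /rho; have := sqnorm_ge0 e; lra. Qed.

Lemma sigma_gt0 e : BMq q e -> 0 < sigma e.
Proof. by rewrite /BMq /sigma; lra. Qed.

Lemma Phi_gt0 e : 0 < Phi e.
Proof. by rewrite /Phi powR_gt0 // invr_gt0 rho_gt0. Qed.

Lemma pdE k (f : 'rV[R]_n -> R) e df :
  is_derive e (basis_vec R k) f df -> pd k f e = df.
Proof. by move=> H; rewrite /pd derive_val. Qed.

Lemma is_derive_sqnorm e k :
  is_derive e (basis_vec R k) (@sqnorm R n) (2 * e ord0 k).
Proof.
apply: is_derive_eq.
  apply: (@is_derive_bigsum _ _ n (fun i y => y ord0 i * y ord0 i)) => i.
  by apply: is_derive_mul; apply: is_derive_coord.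
under eq_bigr do rewrite basis_vecE.
rewrite (eq_bigr (fun i => 2 * (kron k i * e ord0 i))) -?mulr_sumr ?sum_kronr_mul //.
by move=> i _ /=; rewrite kronC; ring.
Qed.

Lemma is_derive_rho e k : is_derive e (basis_vec R k) rho (2 * e ord0 k).
Proof.
apply: is_derive_eq.
  by apply: (is_derive_add (f := fun _ => 1)); exact: is_derive_sqnorm.
by rewrite add0r.
Qed.

Lemma is_derive_sigma e k :
  is_derive e (basis_vec R k) sigma (q * (2 * e ord0 k)).
Proof.
apply: is_derive_eq.
  apply: (is_derive_add (f := fun _ => 1) (g := fun y => q * sqnorm y)).
  by apply: is_derive_mul; exact: is_derive_sqnorm.
by rewrite /=; ring.
Qed.

Lemma is_derive_Phi e k :
  is_derive e (basis_vec R k) Phi (Phi e * (2 * psi e * e ord0 k)).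
Proof.
have r0 := rho_gt0 e.
apply: is_derive_eq.
  apply: (is_derive_compR (f := @omega R n) (g := fun a => a `^ p)).
    by apply: is_derive_inv; [rewrite gt_eqF | exact: is_derive_rho].
  by apply: is_derive1_powR; rewrite invr_gt0.
have o0 : omega e != 0 by rewrite invr_eq0 gt_eqF.
rewrite powRD ?o0 ?implybT // powR_inv1 ?invrK ?invr_ge0 ?ltW // -/(Phi e).
by rewrite /omega -/(rho e) /psi; field; rewrite gt_eqF.
Qed.

Lemma gmatE e i j : gmat p q e i j = Phi e * (kron i j + q * e ord0 i * e ord0 j).
Proof. by rewrite mxE. Qed.

Lemma is_derive_gmat e k i j : is_derive e (basis_vec R k) (fun y => gmat p q y i j)
  (Phi e * (2 * psi e * e ord0 k * (kron i j + q * e ord0 i * e ord0 j)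
            + q * (kron i k * e ord0 j + e ord0 i * kron j k))).
Proof.
have -> : (fun y => gmat p q y i j) =
          (fun y => Phi y * (kron i j + q * y ord0 i * y ord0 j)).
  by apply: funext => y; rewrite gmatE.
apply: is_derive_eq.
  by apply: is_derive_mul; [exact: is_derive_Phi | derive_poly].
rewrite !basis_vecE; ring.
Qed.

Definition chrA e := (q * rho e + p) / (rho e * sigma e).
Definition chrB e := q * p / (rho e * sigma e).

Definition chr2_closed m i j e :=
  psi e * (e ord0 i * kron j m + e ord0 j * kron i m) + chrA e * kron i j * e ord0 m
  + chrB e * e ord0 i * e ord0 j * e ord0 m.

Lemma chr1E l i j e : chr1 p q l i j e =
  Phi e * (psi e * (e ord0 i * kron j l + e ord0 j * kron i l - e ord0 l * kron i j)
     + psi e * q * e ord0 i * e ord0 j * e ord0 l + q * kron i j * e ord0 l).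
Proof.
by rewrite /chr1 !(pdE (is_derive_gmat _ _ _ _)) (kronC j i) (kronC l i) (kronC l j); field.
Qed.

(* the Sherman-Morrison inverse of Phi (1 + q e^T e) *)
Definition ginv_closed e : 'M[R]_n :=
  \matrix_(i, j) ((Phi e)^-1 * (kron i j - q / sigma e * e ord0 i * e ord0 j)).

Lemma gmat_ginv_closed e : BMq q e -> gmat p q e *m ginv_closed e = 1%:M.
Proof.
move=> Be; have s0 := sigma_gt0 Be; have P0 := Phi_gt0 e.
apply/matrixP => i j; rewrite !mxE.
rewrite (eq_bigr (fun l => (Phi e * kron i l + Phi e * q * e ord0 i * e ord0 l) *
   ((Phi e)^-1 * kron j l + 0 * kron j l
    + (- (Phi e)^-1 * q / sigma e * e ord0 j) * e ord0 l))); last first.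
  by move=> l _; rewrite gmatE !mxE (kronC l j); ring.
rewrite sum_kron_rank1 (kronC j i) -[\sum_l _ * _]/(sqnorm e).
rewrite /kron eq_sym; rewrite /sigma in s0 *.
by field; rewrite !gt_eqF.
Qed.

Lemma ginvE e : BMq q e -> ginv p q e = ginv_closed e.
Proof.
move=> /gmat_ginv_closed gG; have [gU _] := mulmx1_unit gG.
by rewrite /ginv -[LHS]mulmx1 -gG mulmxA mulVmx // mul1mx.
Qed.

Lemma chr2E m i j e : BMq q e -> chr2 p q m i j e = chr2_closed m i j e.
Proof.
move=> Be; have s0 := sigma_gt0 Be; have P0 := Phi_gt0 e; have r0 := rho_gt0 e.
rewrite /chr2 ginvE //.
rewrite (eq_bigr (fun l => ((Phi e)^-1 * kron m l
      + (- (Phi e)^-1 * q / sigma e * e ord0 m) * e ord0 l) *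
   ((Phi e * psi e * e ord0 i) * kron j l + (Phi e * psi e * e ord0 j) * kron i l
     + (Phi e * (- psi e * kron i j + psi e * q * e ord0 i * e ord0 j
                 + q * kron i j)) * e ord0 l))); last first.
  by move=> l _; rewrite chr1E !mxE; ring.
rewrite sum_kron_rank1 -[\sum_l _ * _]/(sqnorm e) /chr2_closed /chrA /chrB /psi.
rewrite /sigma /rho in s0 r0 *.
by field; rewrite !gt_eqF.
Qed.

End FibreMetric.

Section Curvature.
Variables (R : realType) (n : nat) (p q : R).
Implicit Types (e y : 'rV[R]_n) (i j k l m : 'I_n).
Local Notation psi := (psi p).
Local Notation chrA := (chrA p q).
Local Notation chrB := (chrB p q).
Local Notation sigma := (sigma q).
Local Notation chr2_closed := (chr2_closed p q).

Lemma BMq_nbhs e : BMq q e -> \forall y \near e, BMq q y.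
Proof.
have sqnorm_cont : {for e, continuous (@sqnorm R n)}.
  have : differentiable (\sum_(i < n) ((fun y : 'rV[R]_n => y ord0 i : R^o) *
                                      (fun y => y ord0 i))) e.
    apply: differentiable_sum => i; apply: differentiableM; exact: differentiable_coord.
  move/differentiable_continuous; congr {for e, continuous _}.
  by apply: funext => y; rewrite fct_sumE.
exact: cvgr_gt _ (cvgMl_tmp sqnorm_cont) _.
Qed.

(* psi, chrA and chrB are functions of t = |e|^2; dpsi, dchrA, dchrB are their
   derivatives in t, so that d_k f = 2 e_k f'. *)
Definition dpsi e := p / rho e ^+ 2.
Definition dchrA e := q / (rho e * sigma e)
  - (q * rho e + p) * (sigma e + q * rho e) / (rho e * sigma e) ^+ 2.
Definition dchrB e := - (q * p) * (sigma e + q * rho e) / (rho e * sigma e) ^+ 2.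

Lemma is_derive_psi e k : is_derive e (basis_vec R k) psi (2 * e ord0 k * dpsi e).
Proof.
have r0 := rho_gt0 e.
apply: is_derive_eq.
  apply: (is_derive_mul (f := fun _ => - p) (g := fun y => (rho y)^-1)).
  by apply: is_derive_inv; [rewrite gt_eqF | exact: is_derive_rho].
by rewrite /dpsi; field; rewrite gt_eqF.
Qed.

Lemma is_derive_chrA e k : BMq q e ->
  is_derive e (basis_vec R k) chrA (2 * e ord0 k * dchrA e).
Proof.
move=> Be; have r0 := rho_gt0 e; have s0 := sigma_gt0 Be.
apply: is_derive_eq.
  apply: (is_derive_mul (f := fun y => q * rho y + p) (g := fun y => (rho y * sigma y)^-1)).
    by apply: is_derive_add; apply: is_derive_mul; exact: is_derive_rho.
  apply: is_derive_inv; first by rewrite mulf_neq0 // gt_eqF.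
  by apply: is_derive_mul; [exact: is_derive_rho | exact: is_derive_sigma].
by rewrite /dchrA; field; rewrite !gt_eqF.
Qed.

Lemma is_derive_chrB e k : BMq q e ->
  is_derive e (basis_vec R k) chrB (2 * e ord0 k * dchrB e).
Proof.
move=> Be; have r0 := rho_gt0 e; have s0 := sigma_gt0 Be.
apply: is_derive_eq.
  apply: (is_derive_mul (f := fun y => q * p) (g := fun y => (rho y * sigma y)^-1)).
  apply: is_derive_inv; first by rewrite mulf_neq0 // gt_eqF.
  by apply: is_derive_mul; [exact: is_derive_rho | exact: is_derive_sigma].
by rewrite /dchrB; field; rewrite !gt_eqF.
Qed.

Definition dchr2_closed m i j k e :=
  2 * e ord0 k * dpsi e * (e ord0 i * kron j m + e ord0 j * kron i m)
  + psi e * (kron i k * kron j m + kron j k * kron i m)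
  + 2 * e ord0 k * dchrA e * kron i j * e ord0 m + chrA e * kron i j * kron m k
  + 2 * e ord0 k * dchrB e * e ord0 i * e ord0 j * e ord0 m
  + chrB e * (kron i k * e ord0 j * e ord0 m + e ord0 i * kron j k * e ord0 m
              + e ord0 i * e ord0 j * kron m k).

Lemma is_derive_chr2_closed m i j k e : BMq q e ->
  is_derive e (basis_vec R k) (chr2_closed m i j) (dchr2_closed m i j k e).
Proof.
move=> Be; apply: is_derive_eq.
  apply: is_derive_add; [apply: is_derive_add|].
  - by apply: is_derive_mul; [exact: is_derive_psi | derive_poly].
  - apply: is_derive_mul; last exact: is_derive_coord.
    by apply: is_derive_mul; exact: is_derive_chrA.
  - apply: is_derive_mul; last exact: is_derive_coord.
    apply: is_derive_mul; last exact: is_derive_coord.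
    by apply: is_derive_mul; [exact: is_derive_chrB | exact: is_derive_coord].
by rewrite /dchr2_closed !basis_vecE; ring.
Qed.

Lemma pd_chr2 m i j k e : BMq q e -> pd k (chr2 p q m i j) e = dchr2_closed m i j k e.
Proof.
move=> Be; rewrite /pd (@near_eq_derive _ _ _ _ (chr2_closed m i j)).
  by case: (is_derive_chr2_closed m i j k Be).
by apply: filterS (BMq_nbhs Be) => y By; rewrite chr2E.
Qed.

Lemma sum_chr2_mul e (w : 'I_n -> R) l i : BMq q e ->
  \sum_m chr2 p q l i m e * w m = psi e * e ord0 i * w l
    + psi e * kron i l * (\sum_m e ord0 m * w m) + chrA e * e ord0 l * w i
    + chrB e * e ord0 i * e ord0 l * (\sum_m e ord0 m * w m).
Proof.
move=> Be.
rewrite (eq_bigr (fun m => (psi e * e ord0 i) * (kron m l * w m)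
    + (chrA e * e ord0 l) * (kron i m * w m)
    + (psi e * kron i l + chrB e * e ord0 i * e ord0 l) * (e ord0 m * w m))); last first.
  by move=> m _; rewrite chr2E // /chr2_closed; ring.
by rewrite !big_split /= -!mulr_sumr sum_kronl_mul sum_kronr_mul; ring.
Qed.

Lemma sum_coord_chr2 e j k : BMq q e ->
  \sum_m e ord0 m * chr2 p q m j k e =
    psi e * (e ord0 j * e ord0 k + e ord0 k * e ord0 j)
    + chrA e * kron j k * sqnorm e + chrB e * e ord0 j * e ord0 k * sqnorm e.
Proof.
move=> Be.
rewrite (eq_bigr (fun m => (psi e * e ord0 j) * (e ord0 m * kron k m)
    + (psi e * e ord0 k) * (e ord0 m * kron j m)
    + (chrA e * kron j k + chrB e * e ord0 j * e ord0 k) * (e ord0 m * e ord0 m)));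
  last by move=> m _; rewrite chr2E // /chr2_closed; ring.
by rewrite !big_split /= -!mulr_sumr !sum_mul_kronr -[\sum_m _ * _]/(sqnorm e); ring.
Qed.

Definition curv1 e := chrA e - psi e + psi e * chrA e * sqnorm e.
Definition curv2 e := -2 * dpsi e + chrB e + psi e ^+ 2 + psi e * chrB e * sqnorm e.
Definition curv3 e := 2 * dchrA e - chrB e + chrA e ^+ 2 + chrA e * chrB e * sqnorm e.

Lemma riemE l i j k e : BMq q e -> riem p q l i j k e =
  curv1 e * (kron j k * kron i l - kron i k * kron j l)
  + curv2 e * (e ord0 k * e ord0 j * kron i l - e ord0 k * e ord0 i * kron j l)
  + curv3 e * (e ord0 l * e ord0 i * kron j k - e ord0 l * e ord0 j * kron i k).
Proof.
move=> Be.
rewrite /riem !pd_chr2 // sumrB.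
rewrite (sum_chr2_mul (fun m => chr2 p q m j k e) l i Be).
rewrite (sum_chr2_mul (fun m => chr2 p q m i k e) l j Be) /=.
rewrite !sum_coord_chr2 // !chr2E // /chr2_closed /dchr2_closed /curv1 /curv2 /curv3.
rewrite ?(kronC j i) ?(kronC k i) ?(kronC l i) ?(kronC k j) ?(kronC l j) ?(kronC l k).
ring.
Qed.

End Curvature.

Section SectionalCurvature.
Variables (R : realType) (n : nat) (p q : R).
Implicit Types (e X Y A B : 'rV[R]_n) (i j l : 'I_n).
Local Notation c1 := (curv1 p q).
Local Notation c2 := (curv2 p q).
Local Notation c3 := (curv3 p q).

Lemma sum_riem_k e X Y l i j : BMq q e ->
  \sum_k X ord0 i * Y ord0 j * Y ord0 k * riem p q l i j k e =
  X ord0 i * Y ord0 j * ((c1 e * kron i l + c3 e * e ord0 l * e ord0 i) * Y ord0 j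
     - (c1 e * kron j l + c3 e * e ord0 l * e ord0 j) * Y ord0 i
     + c2 e * (e ord0 j * kron i l - e ord0 i * kron j l) * inner e Y).
Proof.
move=> Be.
rewrite (eq_bigr (fun k =>
    (X ord0 i * Y ord0 j * (c1 e * kron i l + c3 e * e ord0 l * e ord0 i)) * (kron j k * Y ord0 k)
  + (- (X ord0 i * Y ord0 j * (c1 e * kron j l + c3 e * e ord0 l * e ord0 j))) * (kron i k * Y ord0 k)
  + (X ord0 i * Y ord0 j * c2 e * (e ord0 j * kron i l - e ord0 i * kron j l)) * (e ord0 k * Y ord0 k)));
  last by move=> k _; rewrite riemE //; ring.
by rewrite !big_split /= -!mulr_sumr !sum_kronr_mul -[\sum_k e ord0 k * Y ord0 k]/(inner e Y); ring.
Qed.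

Lemma sum_riem_jk e X Y l i : BMq q e ->
  \sum_j \sum_k X ord0 i * Y ord0 j * Y ord0 k * riem p q l i j k e =
  X ord0 i * ((c1 e * kron i l + c3 e * e ord0 l * e ord0 i) * inner Y Y
     - c1 e * Y ord0 l * Y ord0 i - c3 e * e ord0 l * inner e Y * Y ord0 i
     + c2 e * inner e Y * (inner e Y * kron i l - e ord0 i * Y ord0 l)).
Proof.
move=> Be; under eq_bigr do rewrite sum_riem_k //.
rewrite (eq_bigr (fun j =>
    (X ord0 i * (c1 e * kron i l + c3 e * e ord0 l * e ord0 i)) * (Y ord0 j * Y ord0 j)
  + (- X ord0 i * (c1 e * Y ord0 i + c2 e * inner e Y * e ord0 i)) * (Y ord0 j * kron j l)
  + (X ord0 i * (- c3 e * e ord0 l * Y ord0 i + c2 e * inner e Y * kron i l))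
    * (e ord0 j * Y ord0 j))); last by move=> j _; ring.
rewrite !big_split /= -!mulr_sumr !sum_mul_kronl.
by rewrite -[\sum_j e ord0 j * Y ord0 j]/(inner e Y) -[\sum_j Y ord0 j * Y ord0 j]/(inner Y Y); ring.
Qed.

Definition RXYY_closed e X Y : 'rV[R]_n :=
  c1 e *: (inner Y Y *: X - inner X Y *: Y)
  + (c2 e * inner e Y) *: (inner e Y *: X - inner e X *: Y)
  + (c3 e * (inner e X * inner Y Y - inner e Y * inner X Y)) *: e.

Lemma RXYYE e X Y : BMq q e -> RXYY p q e X Y = RXYY_closed e X Y.
Proof.
move=> Be; apply/rowP => l; rewrite !mxE.
under eq_bigr do rewrite sum_riem_jk //.
rewrite (eq_bigr (fun i =>
    (c1 e * inner Y Y + c2 e * inner e Y * inner e Y) * (X ord0 i * kron i l)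
  + (c3 e * e ord0 l * inner Y Y - c2 e * inner e Y * Y ord0 l) * (X ord0 i * e ord0 i)
  + (- c1 e * Y ord0 l - c3 e * e ord0 l * inner e Y) * (X ord0 i * Y ord0 i)));
  last by move=> i _; ring.
rewrite !big_split /= -!mulr_sumr !sum_mul_kronl -[\sum_i X ord0 i * e ord0 i]/(inner X e).
by rewrite -[\sum_i X ord0 i * Y ord0 i]/(inner X Y) (innerC X e); ring.
Qed.

Lemma hvE e A B : hv p q e A B = Phi p e * (inner A B + q * inner A e * inner e B).
Proof.
rewrite /hv (eq_bigr (fun i => Phi p e * (A ord0 i * B ord0 i)
    + (Phi p e * q * inner e B) * (A ord0 i * e ord0 i))); last first.
  move=> i _; rewrite (eq_bigr (fun j => (A ord0 i * Phi p e) * (kron i j * B ord0 j)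
      + (A ord0 i * Phi p e * q * e ord0 i) * (e ord0 j * B ord0 j))); last first.
    by move=> j _; rewrite gmatE; ring.
  by rewrite big_split /= -!mulr_sumr sum_kronr_mul -/(inner e B); ring.
rewrite big_split /= -!mulr_sumr -[\sum_i A ord0 i * B ord0 i]/(inner A B).
by rewrite -[\sum_i A ord0 i * e ord0 i]/(inner A e); ring.
Qed.

End SectionalCurvature.

Section Gram.
Variables (R : realType) (n : nat).
Implicit Types (e X Y : 'rV[R]_n).

Definition gram X Y := inner X X * inner Y Y - inner X Y ^+ 2.

(* |<e,X> Y - <e,Y> X|^2, that is |e|^2 (gram X Y) times the squared cosine of
   the angle between e and the plane spanned by X and Y *)
Definition gram_proj e X Y := inner e X ^+ 2 * inner Y Y
  - 2 * inner e X * inner e Y * inner X Y + inner e Y ^+ 2 * inner X X.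

Lemma gram_proj_ge0 e X Y : 0 <= gram_proj e X Y.
Proof.
have -> : gram_proj e X Y = inner (inner e X *: Y - inner e Y *: X)
                                  (inner e X *: Y - inner e Y *: X).
  by rewrite !innerE /gram_proj (innerC Y X); ring.
exact: inner_ge0.
Qed.

Lemma gram_proj_le e X Y : 0 < gram X Y -> gram_proj e X Y <= sqnorm e * gram X Y.
Proof.
move=> D0.
set a := inner X X; set b := inner Y Y; set m := inner X Y.
set x := inner e X; set y := inner e Y.
set Z := gram X Y *: e - (x * b - y * m) *: X - (y * a - x * m) *: Y.
have : inner Z Z = gram X Y * (sqnorm e * gram X Y - gram_proj e X Y).
  rewrite /Z !innerE /gram /gram_proj -/a -/b -/m -/x -/y.
  rewrite ?(innerC Y X) ?(innerC X e) ?(innerC Y e) -/m -/x -/y.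
  by rewrite -/(sqnorm e); ring.
by move=> ZZ; have := inner_ge0 Z; rewrite ZZ pmulr_rge0 //; lra.
Qed.

Lemma gram_gt0 X Y : row_free (col_mx X Y) -> 0 < gram X Y.
Proof.
move=> XYfree; rewrite ltNge; apply/negP => D0.
have indep (a b : R) : a *: X + b *: Y = 0 -> a = 0 /\ b = 0.
  move=> abXY; have : row_mx (a%:M : 'M[R]_1) b%:M *m col_mx X Y == 0.
    by rewrite mul_row_col !mul_scalar_mx abXY.
  rewrite mulmx_free_eq0 // row_mx_eq0 => /andP [/eqP/matrixP ha /eqP/matrixP hb].
  by move: (ha ord0 ord0) (hb ord0 ord0); rewrite !mxE !mulr1n.
have [XX0|XX0] := eqVneq (inner X X) 0.
  have [] := indep 1 0; last by move=> /eqP; rewrite oner_eq0.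
  by rewrite (inner_eq0 XX0) scaler0 scale0r addr0.
set Z := inner X X *: Y - inner X Y *: X.
have ZZ : inner Z Z = inner X X * gram X Y.
  by rewrite /Z !innerE /gram (innerC Y X); ring.
have Z0 : inner Z Z = 0.
  apply/eqP; rewrite eq_le inner_ge0 andbT ZZ pmulr_rle0 //.
  by rewrite lt_def XX0 inner_ge0.
have [_ XX0'] : - inner X Y = 0 /\ inner X X = 0.
  by apply: indep; rewrite -(inner_eq0 Z0) /Z addrC scaleNr.
by rewrite XX0' eqxx in XX0.
Qed.

End Gram.

Lemma gram_proj_dim2 (R : realType) (e X Y : 'rV[R]_2) :
  gram_proj e X Y = sqnorm e * gram X Y.
Proof. by rewrite /gram_proj /gram /sqnorm /inner !big_ord_recr !big_ord0 /=; ring. Qed.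

Section SectionalSign.
Variables (R : realType) (p q : R).
Implicit Types (t : R).

(* P(t) and Q(t): the sign of the sectional curvature of a vertical plane
   orthogonal to (resp. containing) the position vector e with |e|^2 = t *)
Definition tan_poly t := (2 * p + q) + (2 * q + 2 * p - p ^+ 2) * t + q * t ^+ 2.
Definition rad_poly t := (2 * p + q) + (2 * q + p * q) * t + q * (1 - p) * t ^+ 2.

Variable n : nat.
Implicit Types (e X Y : 'rV[R]_n).
Local Notation sigma := (sigma q).

Lemma curv1E e : BMq q e -> curv1 p q e = tan_poly (sqnorm e) / (rho e ^+ 2 * sigma e).
Proof.
move=> Be; have r0 := rho_gt0 e; have s0 := sigma_gt0 Be.
rewrite /curv1 /tan_poly /chrA /psi; rewrite /rho /sigma in r0 s0 *.
by field; rewrite !gt_eqF.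
Qed.

Lemma curv2E e : BMq q e ->
  curv2 p q e = p * (p + q - 2 - q * sqnorm e) / (rho e ^+ 2 * sigma e).
Proof.
move=> Be; have r0 := rho_gt0 e; have s0 := sigma_gt0 Be.
rewrite /curv2 /chrB /psi /dpsi; rewrite /rho /sigma in r0 s0 *.
by field; rewrite !gt_eqF.
Qed.

Lemma curv2_curv3 e : BMq q e -> curv2 p q e = curv3 p q e * sigma e + q * curv1 p q e.
Proof.
move=> Be; have r0 := rho_gt0 e; have s0 := sigma_gt0 Be.
rewrite /curv1 /curv2 /curv3 /chrB /chrA /psi /dpsi /dchrA.
rewrite /rho /sigma in r0 s0 *.
by field; rewrite !gt_eqF.
Qed.

Lemma hv_RXYY e X Y : BMq q e -> hv p q e (RXYY p q e X Y) X =
  Phi p e * (curv1 p q e * gram X Y + curv2 p q e * gram_proj e X Y).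
Proof.
move=> Be; rewrite RXYYE // hvE /RXYY_closed !innerE (curv2_curv3 Be).
rewrite /gram /gram_proj /sigma ?(innerC Y X) ?(innerC X e) ?(innerC Y e) -/(sqnorm e).
ring.
Qed.

Lemma hv_gram e X Y : hv p q e X X * hv p q e Y Y - hv p q e X Y ^+ 2 =
  Phi p e ^+ 2 * (gram X Y + q * gram_proj e X Y).
Proof. by rewrite !hvE /gram /gram_proj ?(innerC Y X) ?(innerC X e) ?(innerC Y e); ring. Qed.

Lemma hv_gram_gt0 e X Y : BMq q e -> 0 < gram X Y -> 0 < gram X Y + q * gram_proj e X Y.
Proof.
move=> Be D0; have s0 := sigma_gt0 Be; rewrite /sigma in s0.
have E0 := gram_proj_ge0 e X Y; have Ele := gram_proj_le e D0.
have [q0|q0] := leP 0 q; first by have := mulr_ge0 q0 E0; lra.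
have : q * (sqnorm e * gram X Y) <= q * gram_proj e X Y by rewrite ler_wnM2l //; lra.
have : 0 < gram X Y * (1 + q * sqnorm e) by apply: mulr_gt0.
nra.
Qed.

Definition curv_num e X Y := tan_poly (sqnorm e) * gram X Y
  + p * (p + q - 2 - q * sqnorm e) * gram_proj e X Y.

Lemma sectional_gt0E e X Y : BMq q e -> 0 < gram X Y ->
  (0 < sectional p q e X Y) = (0 < curv_num e X Y).
Proof.
move=> Be D0; have K0 := hv_gram_gt0 Be D0; have r0 := rho_gt0 e.
have s0 := sigma_gt0 Be; have P0 := Phi_gt0 p e.
have -> : sectional p q e X Y = curv_num e X Y *
    (Phi p e / (rho e ^+ 2 * sigma e) / (Phi p e ^+ 2 * (gram X Y + q * gram_proj e X Y))).
  rewrite /sectional hv_RXYY // hv_gram curv1E // curv2E // /curv_num.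
  by field; rewrite !gt_eqF.
rewrite pmulr_lgt0 // !divr_gt0 // ?mulr_gt0 // exprn_gt0 //.
Qed.

Lemma sqnorm_mul_curv_num e X Y : sqnorm e * curv_num e X Y =
  tan_poly (sqnorm e) * (sqnorm e * gram X Y - gram_proj e X Y)
  + rad_poly (sqnorm e) * gram_proj e X Y.
Proof. by rewrite /curv_num /tan_poly /rad_poly; ring. Qed.

Lemma sectional_gt0 e X Y : BMq q e -> row_free (col_mx X Y) ->
  0 < tan_poly (sqnorm e) -> 0 < rad_poly (sqnorm e) -> 0 < sectional p q e X Y.
Proof.
move=> Be XYfree P0 Q0; have D0 := gram_gt0 XYfree; rewrite sectional_gt0E //.
have E0 := gram_proj_ge0 e X Y; have Ele := gram_proj_le e D0.
have t0 := sqnorm_ge0 e.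
have [tz|tp] := eqVneq (sqnorm e) 0.
  have E0' : gram_proj e X Y = 0 by move: Ele; rewrite tz mul0r; lra.
  by rewrite /curv_num E0' mulr0 addr0 mulr_gt0.
have tp' : 0 < sqnorm e by rewrite lt_def tp t0.
rewrite -(pmulr_rgt0 _ tp') sqnorm_mul_curv_num.
have h1 : 0 <= tan_poly (sqnorm e) * (sqnorm e * gram X Y - gram_proj e X Y).
  by apply: mulr_ge0; lra.
have [Ez|Ep] := eqVneq (gram_proj e X Y) 0.
  by rewrite Ez mulr0 addr0 subr0 !mulr_gt0.
have : 0 < rad_poly (sqnorm e) * gram_proj e X Y by rewrite mulr_gt0 // lt_def Ep E0.
lra.
Qed.

End SectionalSign.

Lemma sectional_gt0_dim2 (R : realType) (p q : R) (e X Y : 'rV[R]_2) :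
  BMq q e -> row_free (col_mx X Y) ->
  0 < rad_poly p q (sqnorm e) -> 0 < sectional p q e X Y.
Proof.
move=> Be XYfree Q0; have D0 := gram_gt0 XYfree.
rewrite sectional_gt0E // /curv_num gram_proj_dim2.
have -> : tan_poly p q (sqnorm e) * gram X Y
    + p * (p + q - 2 - q * sqnorm e) * (sqnorm e * gram X Y)
  = rad_poly p q (sqnorm e) * gram X Y by rewrite /tan_poly /rad_poly; ring.
exact: mulr_gt0.
Qed.

Section Regions.
Variable R : realType.
Implicit Types (p q t w a b c : R).

Definition admissible q t := 0 <= t /\ 0 < 1 + q * t.

Lemma admissible_sqnorm n q (e : 'rV[R]_n) : BMq q e -> admissible q (sqnorm e).
Proof. by move=> Be; split; [exact: sqnorm_ge0 | exact: sigma_gt0]. Qed.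

Lemma exists_ge0_quadratic_lt0 a b c : c < 0 ->
  exists2 w, 0 <= w & a + b * w + c * w ^+ 2 < 0.
Proof.
move=> c0; set w := (`|a| + `|b|) / (- c) + 1.
have ab0 : 0 <= `|a| + `|b| by rewrite addr_ge0.
have w1 : 1 <= w by rewrite /w lerDr divr_ge0 // oppr_ge0 ltW.
have cw : c * w = - (`|a| + `|b|) + c by rewrite /w; field; rewrite ?oppr_eq0 lt_eqF.
exists w; first lra.
have ha : a <= `|a| := ler_norm a.
have hb : b * w <= `|b| * w by rewrite ler_wpM2r ?ler_norm //; lra.
have haw : `|a| <= `|a| * w by rewrite ler_peMr //; lra.
have : a + b * w + c * w ^+ 2 <= w * (`|a| + `|b| + c * w) by rewrite expr2; nra.
by rewrite cw; nra.
Qed.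

(* t = w / (-q (1 + w)) maps [0, +oo) onto the admissible range [0, -1/q); the
   leading coefficient c - b/q + a/q^2 of the pulled-back quadratic in w is the
   value of the original one at the endpoint t = -1/q *)
Lemma exists_admissible_quadratic_lt0 q a b c : q < 0 -> c - b / q + a / q ^+ 2 < 0 ->
  exists2 t, admissible q t & c + b * t + a * t ^+ 2 < 0.
Proof.
move=> q0 lead0.
have [w w0 Hw] := exists_ge0_quadratic_lt0 c (2 * c - b / q) lead0.
have q0' : q != 0 by rewrite lt_eqF.
have d0 : 0 < - q * (1 + w) by apply: mulr_gt0; lra.
exists (w / (- q * (1 + w))); first split.
- by rewrite divr_ge0 // ltW.
- have -> : 1 + q * (w / (- q * (1 + w))) = (1 + w)^-1 by field; rewrite q0' gt_eqF //; lra.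
  by rewrite invr_gt0; lra.
- have -> : c + b * (w / (- q * (1 + w))) + a * (w / (- q * (1 + w))) ^+ 2
         = (c + (2 * c - b / q) * w + (c - b / q + a / q ^+ 2) * w ^+ 2) / (1 + w) ^+ 2.
    by field; rewrite q0' gt_eqF //; lra.
  by rewrite pmulr_llt0 // invr_gt0 exprn_gt0 //; lra.
Qed.

Lemma tan_rad_poly_gt0_Gamma_plus1 p q t : -8 < p <= -2 -> q > lam p -> 0 <= t ->
  0 < tan_poly p q t /\ 0 < rad_poly p q t.
Proof.
move=> /andP [p8 p2] qlam t0; have p8' : 0 < 8 + p by lra.
move: qlam; rewrite /lam ltr_pdivrMr // => qlam.
have q0 : 0 < q by nra.
have K : 0 < q * (p + 8) + 8 * (p - 1) by lra.
rewrite /tan_poly /rad_poly; split.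
- have h4 : (p - 2) ^+ 2 * (p + 8) <= 32 * (1 - p).
    have -> : 32 * (1 - p) = (p - 2) ^+ 2 * (p + 8) - p * (p + 2) ^+ 2 by ring.
    have : 0 <= - p * (p + 2) ^+ 2 by rewrite mulr_ge0 // ?sqr_ge0; lra.
    lra.
  have h5 : (p - 2) ^+ 2 < 4 * q.
    by rewrite -(ltr_pM2r p8'); rewrite addrC in p8'; lra.
  have I : 4 * q * ((2 * p + q) + (2 * q + 2 * p - p ^+ 2) * t + q * t ^+ 2)
     = (2 * q * t + (2 * q + 2 * p - p ^+ 2)) ^+ 2 + p ^+ 2 * (4 * q - (p - 2) ^+ 2).
    by ring.
  rewrite -(pmulr_rgt0 _ (_ : 0 < 4 * q)) ?I; last lra.
  apply: ltr_wpDl; first exact: sqr_ge0.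
  by rewrite mulr_gt0 ?subr_gt0 // exprn_even_gt0 //= lt_eqF //; lra.
- have q1p : 0 < 4 * (q * (1 - p)) by rewrite !mulr_gt0 //; lra.
  have I : 4 * (q * (1 - p)) * ((2 * p + q) + (2 * q + p * q) * t + q * (1 - p) * t ^+ 2)
     = (2 * q * (1 - p) * t + q * (2 + p)) ^+ 2 + q * (- p) * (q * (p + 8) + 8 * (p - 1)).
    by ring.
  rewrite -(pmulr_rgt0 _ q1p) I; apply: ltr_wpDl; first exact: sqr_ge0.
  by rewrite !mulr_gt0 //; lra.
Qed.

Lemma tan_rad_poly_gt0_Gamma_plus p q t : Gamma_plus p q -> 0 <= t ->
  0 < tan_poly p q t /\ 0 < rad_poly p q t.
Proof.
case=> [[p82 qlam] | G] t0; first exact: tan_rad_poly_gt0_Gamma_plus1.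
have [q0 [c0 [p1 [b1 b2]]]] : [/\ 0 < q, 0 < 2 * p + q, p <= 1,
    0 <= 2 * q + 2 * p - p ^+ 2 & 0 <= 2 * q + p * q].
  by case: G => [[/andP [p2 p0] pq] | [/andP [p0 p1] q0]]; split; nra.
have t2 := sqr_ge0 t.
rewrite /tan_poly /rad_poly; split.
- have : 0 <= (2 * q + 2 * p - p ^+ 2) * t by apply: mulr_ge0.
  have : 0 <= q * t ^+ 2 by rewrite mulr_ge0 //; lra.
  lra.
- have : 0 <= (2 * q + p * q) * t by apply: mulr_ge0.
  have : 0 <= q * (1 - p) * t ^+ 2 by rewrite !mulr_ge0 //; lra.
  lra.
Qed.

Lemma tan_rad_poly_gt0_Gamma p q t : Gamma p q -> admissible q t ->
  0 < tan_poly p q t /\ 0 < rad_poly p q t.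
Proof.
case=> [[pq1 q0] | [[q0 /andP [p0 p2]] | G]] [t0 u0]; last exact: tan_rad_poly_gt0_Gamma_plus.
- have qE : q = 1 - p by lra.
  have p1 : 1 < p by lra.
  split.
  + have -> : tan_poly p q t = (1 + q * t) * (p + 1 + t) by rewrite /tan_poly qE; ring.
    by rewrite mulr_gt0 //; lra.
  + have -> : rad_poly p q t = (1 + q * t) * (p + (1 + q * t)) by rewrite /rad_poly qE; ring.
    by rewrite mulr_gt0 //; lra.
- rewrite /tan_poly /rad_poly q0; split; last lra.
  have : 0 <= (2 * 0 + 2 * p - p ^+ 2) * t by apply: mulr_ge0 => //; nra.
  lra.
Qed.

Lemma rad_poly_gt0_Gamma' p q t : Gamma' p q -> admissible q t -> 0 < rad_poly p q t.
Proof.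
case=> [[pq1 q0] | [[q0 p0] | G]] [t0 u0]; last by case: (tan_rad_poly_gt0_Gamma_plus G t0).
- have -> : rad_poly p q t
      = (1 + q * t) * (p + (1 + q * t)) + (p + q - 1) * (1 - q * t ^+ 2).
    by rewrite /rad_poly; ring.
  apply: ltr_pwDl; first by rewrite mulr_gt0 //; lra.
  have : q * t ^+ 2 <= 0 by rewrite nmulr_rle0 ?sqr_ge0.
  by move=> qt; rewrite mulr_ge0 //; lra.
- by rewrite /rad_poly q0; lra.
Qed.

Lemma rad_poly_le0_qgt0 p q : 0 < q -> ~ Gamma_plus p q ->
  exists2 t, admissible q t & rad_poly p q t <= 0.
Proof.
move=> q0 nG.
have [c0|c0] := leP (2 * p + q) 0; first by exists 0; rewrite /admissible /rad_poly; lra.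
have [p1|p1] := ltP 1 p.
  have lead : q * (1 - p) < 0 by nra.
  have [w w0 Hw] := exists_ge0_quadratic_lt0 (2 * p + q) (2 * q + p * q) lead.
  by exists w; [split; nra | rewrite /rad_poly; lra].
have p2 : p < -2.
  rewrite ltNge; apply/negP => p2; apply: nG; right.
  by have [p0|p0] := leP p 0; [left | right]; split => //; apply/andP; split; lra.
have K : q * (p + 8) + 8 * (p - 1) <= 0.
  have [p8|p8] := leP p (-8); first by nra.
  have : q <= lam p.
    by rewrite leNgt; apply/negP => qlam; apply: nG; left; split => //; apply/andP; split; lra.
  by rewrite /lam ler_pdivlMr; lra.
(* the vertex of the parabola rad_poly *)
set t := - (p + 2) / (2 * (1 - p)).
have d0 : 0 < 2 * (1 - p) by lra.
have t0 : 0 <= t by rewrite /t divr_ge0 //; lra.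
exists t; first by split => //; nra.
have -> : rad_poly p q t = q * (- p) * (q * (p + 8) + 8 * (p - 1)) / (4 * (q * (1 - p))).
  by rewrite /rad_poly /t; field; rewrite !gt_eqF //; lra.
have D4 : 0 < 4 * (q * (1 - p)) by rewrite !mulr_gt0 //; lra.
rewrite pmulr_lle0 ?invr_gt0 // pmulr_rle0 // mulr_gt0 //; lra.
Qed.

Lemma rad_poly_le0_qlt0 p q : q < 0 -> p + q < 1 ->
  exists2 t, admissible q t & rad_poly p q t <= 0.
Proof.
move=> q0 pq.
have [t At Ht] : exists2 t, admissible q t &
    (2 * p + q) + (2 * q + p * q) * t + q * (1 - p) * t ^+ 2 < 0.
  apply: exists_admissible_quadratic_lt0 => //.
  have -> : (2 * p + q) - (2 * q + p * q) / q + q * (1 - p) / q ^+ 2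
     = - ((q - 1) * (p + q - 1) / (- q)) by field; rewrite lt_eqF.
  by rewrite oppr_lt0 divr_gt0 //; nra.
by exists t => //; rewrite /rad_poly; lra.
Qed.

Lemma tan_poly_le0_qlt0 p q : q < 0 -> 1 < p + q ->
  exists2 t, admissible q t & tan_poly p q t <= 0.
Proof.
move=> q0 pq.
have [t At Ht] : exists2 t, admissible q t &
    (2 * p + q) + (2 * q + 2 * p - p ^+ 2) * t + q * t ^+ 2 < 0.
  apply: exists_admissible_quadratic_lt0 => //.
  have -> : (2 * p + q) - (2 * q + 2 * p - p ^+ 2) / q + q / q ^+ 2
     = - ((p + q - 1) ^+ 2 / (- q)) by field; rewrite lt_eqF.
  rewrite oppr_lt0 divr_gt0 //; last lra.
  by rewrite exprn_even_gt0 //= gt_eqF //; lra.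
by exists t => //; rewrite /tan_poly; lra.
Qed.

Lemma tan_rad_poly_le0_not_Gamma p q : ~ Gamma p q ->
  exists2 t, admissible q t & tan_poly p q t <= 0 \/ rad_poly p q t <= 0.
Proof.
move=> nG; have [q0|q0|q0] := ltgtP q 0.
- have [pq|pq|pq] := ltgtP (p + q) 1; last by exfalso; apply: nG; left.
  + by have [t At Qt] := rad_poly_le0_qlt0 q0 pq; exists t; [|right].
  + by have [t At Pt] := tan_poly_le0_qlt0 q0 pq; exists t; [|left].
- have [t At Qt] : exists2 t, admissible q t & rad_poly p q t <= 0.
    by apply: rad_poly_le0_qgt0 => // G; apply: nG; right; right.
  by exists t; [|right].
- have [p0|p0] := leP p 0.
    by exists 0; [|left]; rewrite /admissible /tan_poly q0; lra.
  have p2 : 2 < p.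
    by rewrite ltNge; apply/negP => p2; apply: nG; right; left; split => //; apply/andP.
  (* the positive root of tan_poly when q = 0 *)
  exists (2 / (p - 2)); first by split; rewrite ?q0 ?divr_ge0 //; lra.
  left; rewrite /tan_poly q0.
  suff -> : 2 * p + 0 + (2 * 0 + 2 * p - p ^+ 2) * (2 / (p - 2)) + 0 * (2 / (p - 2)) ^+ 2 = 0
    by [].
  by field; rewrite subr_eq0 gt_eqF.
Qed.

Lemma rad_poly_le0_not_Gamma' p q : ~ Gamma' p q ->
  exists2 t, admissible q t & rad_poly p q t <= 0.
Proof.
move=> nG; have [q0|q0|q0] := ltgtP q 0.
- apply: rad_poly_le0_qlt0 => //.
  by rewrite ltNge; apply/negP => pq; apply: nG; left.
- by apply: rad_poly_le0_qgt0 => // G; apply: nG; right; right.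
- have p0 : p <= 0 by rewrite leNgt; apply/negP => p0; apply: nG; right; left.
  by exists 0; rewrite /admissible /rad_poly q0; lra.
Qed.

Lemma Gamma_tan_rad_poly p q : Gamma p q <->
  (forall t, admissible q t -> 0 < tan_poly p q t /\ 0 < rad_poly p q t).
Proof.
split=> [G t At | PQ]; first exact: tan_rad_poly_gt0_Gamma.
have [//|nG] := pselect (Gamma p q).
have [t At] := tan_rad_poly_le0_not_Gamma nG.
by have [P0 Q0] := PQ t At; rewrite !leNgt P0 Q0; case.
Qed.

Lemma Gamma'_rad_poly p q : Gamma' p q <->
  (forall t, admissible q t -> 0 < rad_poly p q t).
Proof.
split=> [G t At | Q]; first exact: rad_poly_gt0_Gamma'.
have [//|nG] := pselect (Gamma' p q).
have [t At] := rad_poly_le0_not_Gamma' nG.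
by rewrite leNgt Q.
Qed.

End Regions.

Section Witnesses.
Variables (R : realType) (n : nat) (p q : R).
Implicit Types (t : R) (a b c : 'I_n).
Local Notation bv := (basis_vec R).

Lemma inner_basis_vec a b : inner (bv a) (bv b) = kron a b.
Proof. by rewrite /inner; under eq_bigr do rewrite !basis_vecE; rewrite sum_kronl_mul. Qed.

Lemma row_free_basis_vec a b : a != b -> row_free (col_mx (bv a) (bv b)).
Proof.
move=> ab; apply/row_freeP; exists (col_mx (bv a) (bv b))^T.
have mulmxT (X Y : 'rV[R]_n) : X *m Y^T = (inner X Y)%:M.
  by apply/matrixP => i j; rewrite !ord1 !mxE; apply: eq_bigr => k _; rewrite !mxE.
rewrite tr_col_mx mul_col_row !mulmxT !inner_basis_vec /kron !eqxx (negbTE ab).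
by rewrite eq_sym (negbTE ab) scalar_mx_block raddf0.
Qed.

Lemma gram_basis_vec a b : a != b -> gram (bv a) (bv b) = 1.
Proof. by move=> ab; rewrite /gram !inner_basis_vec /kron !eqxx (negbTE ab) /=; ring. Qed.

Lemma sqnorm_scaled_basis_vec t c : 0 <= t -> sqnorm (Num.sqrt t *: bv c) = t.
Proof.
move=> t0; rewrite /sqnorm innerZl innerZr inner_basis_vec /kron eqxx mulr1.
by rewrite -expr2 sqr_sqrtr.
Qed.

Lemma curv_num_radial t a b : a != b -> 0 <= t ->
  curv_num p q (Num.sqrt t *: bv a) (bv a) (bv b) = rad_poly p q t.
Proof.
move=> ab t0; rewrite /curv_num /gram_proj gram_basis_vec // sqnorm_scaled_basis_vec //.
rewrite !innerZl !inner_basis_vec /kron !eqxx (negbTE ab) /= !mulr1 !mulr0 sqr_sqrtr //.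
by rewrite /tan_poly /rad_poly; ring.
Qed.

Lemma curv_num_tangential t a b c : a != b -> c != a -> c != b -> 0 <= t ->
  curv_num p q (Num.sqrt t *: bv c) (bv a) (bv b) = tan_poly p q t.
Proof.
move=> ab ca cb t0; rewrite /curv_num /gram_proj gram_basis_vec // sqnorm_scaled_basis_vec //.
by rewrite !innerZl !inner_basis_vec /kron (negbTE ca) (negbTE cb) /=; ring.
Qed.

Lemma vertical_positive_curv_num t a b c : a != b -> admissible q t ->
  vertical_positive n p q -> 0 < curv_num p q (Num.sqrt t *: bv c) (bv a) (bv b).
Proof.
move=> ab [t0 u0] vp; have Be : BMq q (Num.sqrt t *: bv c).
  by rewrite /BMq sqnorm_scaled_basis_vec //; lra.
rewrite -sectional_gt0E ?gram_basis_vec //.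
exact: vp Be (row_free_basis_vec ab).
Qed.

End Witnesses.

Lemma vertical_positive_tan_rad_poly (R : realType) (n : nat) (p q : R) : (3 <= n)%N ->
  vertical_positive n p q <->
  (forall t, admissible q t -> 0 < tan_poly p q t /\ 0 < rad_poly p q t).
Proof.
move=> n3; split=> [vp t At | PQ e X Y Be XYfree].
  have n2 : (1 < n)%N := ltn_trans (ltnSn 1) n3.
  pose i0 := Ordinal (ltn_trans (ltnSn 0) n2); pose i1 := Ordinal n2; pose i2 := Ordinal n3.
  split.
    rewrite -(@curv_num_tangential _ _ _ _ _ i1 i2 i0) //; last exact: At.1.
    exact: vertical_positive_curv_num.
  rewrite -(@curv_num_radial _ _ _ _ _ i0 i1) //; last exact: At.1.
  exact: vertical_positive_curv_num.
have [P0 Q0] := PQ _ (admissible_sqnorm Be).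
exact: sectional_gt0.
Qed.

Lemma vertical_positive_rad_poly_dim2 (R : realType) (p q : R) :
  vertical_positive 2 p q <-> (forall t, admissible q t -> 0 < rad_poly p q t).
Proof.
split=> [vp t At | Q e X Y Be XYfree].
  rewrite -(@curv_num_radial _ 2 _ _ _ ord0 ord_max) //; last exact: At.1.
  exact: vertical_positive_curv_num.
exact: sectional_gt0_dim2 (Q _ (admissible_sqnorm Be)).
Qed.

Theorem theorem2p8 (R : realType) (n : nat) (p q : R) :
  ((3 <= n)%N -> (vertical_positive n p q <-> Gamma p q)) /\
  (n = 2%N -> (vertical_positive n p q <-> Gamma' p q)).
Proof.
split=> [n3 | ->].
  by rewrite Gamma_tan_rad_poly; exact: vertical_positive_tan_rad_poly.
by rewrite Gamma'_rad_poly; exact: vertical_positive_rad_poly_dim2.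
Qed.
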